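(* Let $\Phi$ be a Markov Logic Network and $n,m$ positive integers. Then $$M_{min}\, C_{n,m}\, Z(n)\,Z(m) \leq Z(n+m) \leq Z(n)\,Z(m)\,C_{n,m}\, M_{max},$$ where $M_{max} = \prod_{k \in [d]} (w^{max}_{k})^{ \binom{n+m}{k} - \binom{n}{k} - \binom{m}{k}}$ and $M_{min} = \prod_{k \in [d]} (w^{min}_{k})^{ \binom{n+m}{k} - \binom{n}{k} - \binom{m}{k}}$, and $C_{n,m}$ is the number of ways in which an interpretation on $[n]$ and an interpretation on $\{n+1,\dots,n+m\}$ can be extended to an interpretation on $[n+m]$.
   Context: Fix a finite function-free relational first-order signature $\mathcal{R}$. For a positive integer $N$ write $[N]=\{1,\dots,N\}$. For a finite set $D$ of constants, a ground atom over $D$ is $R(a_1,\dots,a_r)$ with $R\in\mathcal{R}$ of arity $r$ and $a_1,\dots,a_r\in D$. An interpretation on $D$ is a map assigning true/false to every ground atom over $D$; $\Omega^{(N)}$ is the set of interpretations on $[N]$. For an interpretation $\omega$ on $D$ and $I\subseteq D$, $\omega\downarrow I$ is the restriction of $\omega$ to the ground atoms all of whose arguments lie in $I$. The number $C_{n,m}$ of interpretations $\omega$ on $[n+m]$ with $\omega\downarrow[n]=\omega'$ and $\omega\downarrow\{n+1,\dots,n+m\}=\omega''$ is the same for every pair $(\omega',\omega'')$ (it equals $2$ to the number of ground atoms over $[n+m]$ having arguments in both $[n]$ and $\{n+1,\dots,n+m\}$). A Markov Logic Network (MLN) $\Phi$ is a finite set of pairs $(\phi_i,a_i)$, where $\phi_i$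 is a function-free, quantifier-free first-order formula over $\mathcal{R}$ and $a_i\in\mathbb{R}$. The arity of $\phi_i$ is the number of distinct variables in it; $\Phi_k$ is the set of pairs whose formula has arity $k$; $d$ is the largest arity. Convention: a formula with $k$ variables is grounded only by substituting $k$ pairwise distinct constants for its variables; for an interpretation $\omega$ on a finite set $D$, $N(\phi,\omega)$ is the number of injective assignments of the variables of $\phi$ to elements of $D$ under which $\phi$ is true in $\omega$. The weight of an interpretation $\omega$ is $w(\omega)=\exp\bigl(\sum_{(\phi_i,a_i)\in\Phi}a_iN(\phi_i,\omega)\bigr)$ and its $k$-weight is $w_k(\omega)=\exp\bigl(\sum_{(\phi_i,a_i)\in\Phi_k}a_iN(\phi_i,\omega)\bigr)$. $w_k^{max}$ and $w_k^{min}$ denote the maximum and minimum of $w_k(\omega')$ over all interpretations $\omega'$ on a $k$-element domain. The partition function is $Z(N)=\sum_{\omega\in\Omega^{(N)}}w(\omega)$. Binomial coefficients $\binom{a}{k}$ with $k>a$ are $0$. *)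

From HB Require Import structures.
From mathcomp Require Import all_boot all_order all_algebra.
From mathcomp Require Import reals.
From mathcomp.analysis Require Import sequences exp.
Set Implicit Arguments. Unset Strict Implicit. Unset Printing Implicit Defensive.
Import Order.TTheory GRing.Theory Num.Theory.
Local Open Scope ring_scope.

Section MLN.
Variables (Rel : finType) (ar : Rel -> nat).

Inductive formula : Type :=
| FAtom (r : Rel) (t : (ar r).-tuple nat)
| FEq (x y : nat)
| FNot (f : formula)
| FAnd (f g : formula)
| FOr (f g : formula).

Fixpoint fvars (f : formula) : seq nat :=
  match f with
  | FAtom _ t => tval t
  | FEq x y => [:: x; y]
  | FNot f => fvars f
  | FAnd f g => fvars f ++ fvars g
  | FOr f g => fvars f ++ fvars g
  end.

Definition vars (f : formula) : seq nat := undup (fvars f).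
Definition arity (f : formula) : nat := size (vars f).

Definition atom (D : finType) := {r : Rel & (ar r).-tuple D}.
Definition interp (D : finType) := {ffun atom D -> bool}.

(** truth of an atom whose arguments are given as options (None never occurs
    for the assignments used below) *)
Definition holds_opt (D : finType) (w : interp D) (r : Rel)
    (t : (ar r).-tuple (option D)) : bool :=
  match [pick u : (ar r).-tuple D | map_tuple Some u == t] with
  | Some u => w (Tagged (fun r => (ar r).-tuple D) u)
  | None => false
  end.

Fixpoint eval (D : finType) (w : interp D) (rho : nat -> option D)
    (f : formula) : bool :=
  match f with
  | FAtom r t => holds_opt w (map_tuple rho t)
  | FEq x y => rho x == rho y
  | FNot f => ~~ eval w rho f
  | FAnd f g => eval w rho f && eval w rho g
  | FOr f g => eval w rho f || eval w rho g
  end.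

Definition Ngr (D : finType) (f : formula) (w : interp D) : nat :=
  #|[set s : {ffun 'I_(arity f) -> D} |
      injectiveb s &&
      eval w (fun x => omap s (insub (index x (vars f)))) f]|.

Variable R : realType.

Definition mln := seq (formula * R).

Definition weight (Phi : mln) (D : finType) (w : interp D) : R :=
  expR (\sum_(p <- Phi) p.2 * (Ngr p.1 w)%:R).

Definition kweight (Phi : mln) (k : nat) (D : finType) (w : interp D) : R :=
  expR (\sum_(p <- Phi | arity p.1 == k) p.2 * (Ngr p.1 w)%:R).

Definition maxarity (Phi : mln) : nat := \max_(p <- Phi) arity p.1.

Definition false_interp (D : finType) : interp D := [ffun => false].

Definition wmax (Phi : mln) (k : nat) : R :=
  \big[Num.max/kweight Phi k (false_interp 'I_k)]_(w : interp 'I_k)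
     kweight Phi k w.
Definition wmin (Phi : mln) (k : nat) : R :=
  \big[Num.min/kweight Phi k (false_interp 'I_k)]_(w : interp 'I_k)
     kweight Phi k w.

Definition Z (Phi : mln) (N : nat) : R := \sum_(w : interp 'I_N) weight Phi w.

Definition map_atom (D D' : finType) (g : D -> D') (a : atom D) : atom D' :=
  Tagged (fun r => (ar r).-tuple D') (map_tuple g (tagged a)).
Definition restr (D D' : finType) (g : D -> D') (w : interp D') : interp D :=
  [ffun a => w (map_atom g a)].

(** number of interpretations on [n+m] extending w1 on [n] (the first n
    elements) and w2 on {n+1..n+m} (identified with [m] by the shift) *)
Definition Cext (n m : nat) (w1 : interp 'I_n) (w2 : interp 'I_m) : nat :=
  #|[set w : interp 'I_(n + m) |
      (restr (@lshift n m) w == w1) && (restr (@rshift n m) w == w2)]|.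

Definition Mfac (c : nat -> R) (n m d : nat) : R :=
  \prod_(1 <= k < d.+1) c k ^+ ('C(n + m, k) - 'C(n, k) - 'C(m, k)).

End MLN.

From HB Require Import structures.
From mathcomp Require Import all_boot all_order all_algebra.
From mathcomp Require Import reals.
From mathcomp.analysis Require Import sequences exp.
Import Order.TTheory GRing.Theory Num.Theory.
Set Implicit Arguments.
Unset Strict Implicit.
Unset Printing Implicit Defensive.

(* An injective grounding of a formula with k variables uses a set S of
   exactly k constants, and the groundings using S are those of the formula
   in w restricted to S.  Sorting the subsets of [n+m] into those inside [n],
   those inside {n+1..n+m} and the remaining mixed ones factors
     w(ω) = w(ω↓[n]) · w(ω↓{n+1..n+m}) · ∏_{S mixed} w_|S|(ω↓S),
   where each factor of the product lies between w^min_|S| and w^max_|S|, and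
   there are C(n+m,k) - C(n,k) - C(m,k) mixed sets of size k.  Summing over ω
   grouped by its two restrictions gives the bounds, since every pair of
   restrictions has the same number C_{n,m} of common extensions.  Positive
   arities ensure that no formula is grounded by the empty set, which lies on
   both sides of the split, and that no ground atom lives over both parts. *)

Section Groundings.
Variables (Rel : finType) (ar : Rel -> nat).
Hypothesis ar_gt0 : forall r : Rel, 0 < ar r.
Implicit Types (f : formula ar) (D : finType).

Lemma arity_gt0 f : 0 < arity f.
Proof.
have [x fx] : exists x, x \in fvars f.
  elim: f => [r t|x y|f //|f [x fx] g _|f [x fx] g _] /=.
  - by exists (tnth t (Ordinal (ar_gt0 r))); rewrite mem_tnth.
  - by exists x; rewrite mem_head.
  - by exists x; rewrite mem_cat fx.
  - by exists x; rewrite mem_cat fx.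
have : x \in vars f by rewrite mem_undup.
by rewrite /arity; case: (vars f).
Qed.

Lemma holds_opt_Some D (w : interp ar D) r (u : (ar r).-tuple D) :
  holds_opt w (map_tuple Some u) = w (Tagged (fun r => (ar r).-tuple D) u).
Proof.
rewrite /holds_opt; case: pickP => [v /eqP/(congr1 val) /= vu | /(_ u)].
  by congr (w (Tagged _ _)); apply/val_inj/(inj_map (@Some_inj _)).
by rewrite eqxx.
Qed.

Lemma eq_eval D (w : interp ar D) rho1 rho2 f :
  rho1 =1 rho2 -> eval w rho1 f = eval w rho2 f.
Proof.
move=> rho12; elim: f => [r t|x y|f IH|f IHf g IHg|f IHf g IHg] /=.
- by congr holds_opt; apply/val_inj/eq_map.
- by rewrite !rho12.
- by rewrite IH.
- by rewrite IHf IHg.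
- by rewrite IHf IHg.
Qed.

Lemma eval_restr D D' (g : D -> D') (w : interp ar D') f rho
    (sigma : nat -> D) :
  injective g -> {in fvars f, forall x, rho x = Some (sigma x)} ->
  eval (restr g w) rho f = eval w (fun x => omap g (rho x)) f.
Proof.
move=> g_inj; elim: f => [r t|x y|f IH|f IHf h IHh|f IHf h IHh] /= rhoE.
- have -> : map_tuple rho t = map_tuple Some (map_tuple sigma t).
    by apply/val_inj; rewrite /= -map_comp; apply/eq_in_map => x /rhoE.
  have -> : map_tuple (fun x => omap g (rho x)) t
         = map_tuple Some (map_tuple (g \o sigma) t).
    by apply/val_inj; rewrite /= -map_comp; apply/eq_in_map => x /rhoE /= ->.
  rewrite !holds_opt_Some ffunE; congr (w (Tagged _ _)).
  by apply/val_inj; rewrite /= -map_comp.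
- by rewrite !rhoE ?inE ?eqxx ?orbT //= !(inj_eq (@Some_inj _)) (inj_eq g_inj).
- by rewrite IH.
- by rewrite IHf ?IHh // => x xf; rewrite rhoE // mem_cat xf ?orbT.
- by rewrite IHf ?IHh // => x xf; rewrite rhoE // mem_cat xf ?orbT.
Qed.

Definition assign f D (s : {ffun 'I_(arity f) -> D}) : nat -> option D :=
  fun x => omap s (insub (index x (vars f))).

Definition grounding_set f D (s : {ffun 'I_(arity f) -> D}) : {set D} :=
  [set s i | i : 'I_(arity f)].

Definition Ngr_in D (w : interp ar D) f (P : pred {set D}) : nat :=
  #|[set s : {ffun 'I_(arity f) -> D} |
      [&& injectiveb s, P (grounding_set s) & eval w (assign s) f]]|.

Lemma assign_fvars f D (s : {ffun 'I_(arity f) -> D}) x : x \in fvars f ->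
  exists i : 'I_(arity f), assign s x = Some (s i).
Proof.
move=> xf; have ltx : index x (vars f) < arity f by rewrite index_mem mem_undup.
by exists (Ordinal ltx); rewrite /assign insubT.
Qed.

Lemma card_grounding_set f D (s : {ffun 'I_(arity f) -> D}) :
  injectiveb s -> #|grounding_set s| = arity f.
Proof. by move/injectiveP => s_inj; rewrite card_imset // card_ord. Qed.

Lemma Ngr_inT D (w : interp ar D) f : Ngr f w = Ngr_in w f predT.
Proof. by apply: eq_card => s; rewrite !inE. Qed.

Lemma Ngr_in_partition D (w : interp ar D) f P :
  Ngr_in w f P =
  \sum_(S : {set D} | P S && (#|S| == arity f)) Ngr_in w f (pred1 S).
Proof.
rewrite /Ngr_in -sum1_card (partition_big (@grounding_set f D)
   (fun S => P S && (#|S| == arity f))) => [|s]; last first.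
  by rewrite inE => /and3P[s_inj PS _]; rewrite PS card_grounding_set ?eqxx.
apply: eq_bigr => S /andP[PS _]; rewrite -sum1_card; apply: eq_bigl => s.
rewrite !inE /=; case: eqP => [->|_]; by rewrite ?PS ?andbF ?andbT.
Qed.

Lemma eval_assign_restr D D' (g : D -> D') (w : interp ar D') f
    (s : {ffun 'I_(arity f) -> D}) (t : {ffun 'I_(arity f) -> D'}) :
  injective g -> (forall i, t i = g (s i)) ->
  eval (restr g w) (assign s) f = eval w (assign t) f.
Proof.
move=> g_inj ts; pose d0 := s (Ordinal (arity_gt0 f)).
rewrite (@eval_restr _ _ _ _ _ _ (fun x => odflt d0 (assign s x))) //.
  by apply: eq_eval => x; rewrite /assign; case: insub => //= i; rewrite ts.
by move=> x /(assign_fvars s) [i ->].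
Qed.

Lemma Ngr_restr D D' (g : D -> D') (w : interp ar D') f : injective g ->
  Ngr f (restr g w) = Ngr_in w f (fun S => S \subset [set g x | x : D]).
Proof.
move=> g_inj.
pose G (s : {ffun 'I_(arity f) -> D}) : {ffun 'I_(arity f) -> D'} :=
  [ffun i => g (s i)].
have G_inj : injective G.
  move=> s1 s2 /ffunP G12; apply/ffunP => i; apply/g_inj.
  by have := G12 i; rewrite !ffunE.
rewrite /Ngr -(card_imset _ G_inj); apply: eq_card => t; apply/imsetP/idP.
  case=> s; rewrite !inE => /andP[/injectiveP s_inj ev] ->; apply/and3P; split.
  - by apply/injectiveP => i j; rewrite !ffunE => /g_inj/s_inj.
  - by apply/subsetP => _ /imsetP[i _ ->]; rewrite ffunE imset_f.
  - by rewrite -(eval_assign_restr w (s := s) g_inj) // => i; rewrite ffunE.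
rewrite inE => /and3P[/injectiveP t_inj /subsetP t_img ev].
have t_g i : t i \in codom g.
  have /t_img/imsetP[x _ ->] : t i \in grounding_set t by apply: imset_f.
  exact: codom_f.
have Gt : G [ffun i => iinv (t_g i)] = t.
  by apply/ffunP => i; rewrite !ffunE f_iinv.
exists [ffun i => iinv (t_g i)] => //; rewrite inE; apply/andP; split.
  apply/injectiveP => i j; rewrite !ffunE => /(congr1 g).
  by rewrite !f_iinv => /t_inj.
by rewrite (eval_assign_restr w g_inj (t := t)) // => i; rewrite ffunE f_iinv.
Qed.

Definition restr_set D (S : {set D}) (w : interp ar D) : interp ar 'I_#|S| :=
  restr (@enum_val _ (mem S)) w.

Lemma Ngr_in1 D (w : interp ar D) f (S : {set D}) : #|S| = arity f ->
  Ngr_in w f (pred1 S) = Ngr f (restr_set S w).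
Proof.
move=> cardS; have enumS : [set enum_val i | i : 'I_#|S|] = S.
  apply/setP => x; apply/imsetP/idP => [[i _ ->]|xS]; first exact: enum_valP.
  by exists (enum_rank_in xS x); rewrite ?enum_rankK_in.
rewrite /restr_set (Ngr_restr _ _ enum_val_inj) enumS.
apply: eq_card => s; rewrite !inE; case s_inj: (injectiveb s) => //=.
by rewrite eqEcard card_grounding_set // cardS leqnn andbT.
Qed.

End Groundings.

Section MixedSets.
Variables (T : finType) (A B : {set T}).
Hypothesis AB : [disjoint A & B].

Definition mixed (S : {set T}) := ~~ (S \subset A) && ~~ (S \subset B).

Lemma subset_disjoint_eq0 (S : {set T}) :
  S \subset A -> S \subset B -> S = set0.
Proof.
by move=> SA SB; apply/eqP; rewrite -subset0 -(disjoint_setI0 AB) subsetI SA.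
Qed.

Lemma sum_card_mixed_split (F : {set T} -> nat) k : 0 < k ->
  \sum_(S : {set T} | #|S| == k) F S =
  \sum_(S : {set T} | (S \subset A) && (#|S| == k)) F S +
  \sum_(S : {set T} | (S \subset B) && (#|S| == k)) F S +
  \sum_(S : {set T} | mixed S && (#|S| == k)) F S.
Proof.
move=> k_gt0; rewrite [LHS](bigID (fun S : {set T} => S \subset A)).
rewrite [X in _ + X = _](bigID (fun S : {set T} => S \subset B)) /=.
rewrite addnA; congr (_ + _ + _); apply: eq_bigl => S; rewrite /mixed.
- by rewrite andbC.
- case: (boolP (S \subset A)) => SA; case: (boolP (S \subset B)) => SB;
    rewrite /= ?andbF ?andbT //.
  by rewrite (subset_disjoint_eq0 SA SB) cards0 eq_sym gtn_eqF.
- by case: (S \subset A); case: (S \subset B); rewrite /= ?andbF ?andbT.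
Qed.

Lemma card_mixed k :
  #|[set S : {set T} | mixed S && (#|S| == k)]| =
  'C(#|T|, k) - 'C(#|A|, k) - 'C(#|B|, k).
Proof.
case: k => [|k].
  rewrite !bin0; apply/eqP; rewrite cards_eq0; apply/eqP/setP => S.
  rewrite !inE /mixed; case: eqP => [/cards0_eq ->|];
    by rewrite ?sub0set ?andbF.
have := sum_card_mixed_split (fun=> 1) (ltn0Sn k).
rewrite !sum1dep_card card_draws !cards_draws => ->.
by rewrite -addnA addKn addKn.
Qed.

Local Open Scope ring_scope.

Lemma prod_mixed (R : comPzSemiRingType) (c : nat -> R) :
  \prod_(S : {set T} | mixed S) c #|S| =
  \prod_(1 <= k < #|T|.+1) c k ^+ ('C(#|T|, k) - 'C(#|A|, k) - 'C(#|B|, k)).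
Proof.
rewrite (partition_big (fun S : {set T} => inord #|S| : 'I_#|T|.+1) xpredT) //=.
under eq_bigr => k _.
  rewrite (eq_bigl (fun S => S \in [set S : {set T} | mixed S && (#|S| == k)]));
    last by move=> S; rewrite inE -val_eqE /= inordK // ltnS max_card.
  rewrite (eq_bigr (fun=> c k));
    last by move=> S; rewrite inE => /andP[_ /eqP ->].
  rewrite prodr_const card_mixed.
  over.
pose e k := ('C(#|T|, k) - 'C(#|A|, k) - 'C(#|B|, k))%N.
rewrite -(big_mkord xpredT (fun k => c k ^+ e k)) big_ltn //=.
by rewrite /e !bin0 expr0 mul1r.
Qed.

End MixedSets.

Section Weights.
Variables (Rel : finType) (ar : Rel -> nat) (R : realType) (Phi : mln ar R).
Local Open Scope ring_scope.

Lemma kweight_gt0 k (D : finType) (w : interp ar D) : 0 < kweight Phi k w.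
Proof. exact: expR_gt0. Qed.

Lemma kweight_le_wmax k (w : interp ar 'I_k) : kweight Phi k w <= wmax Phi k.
Proof. exact: le_bigmax. Qed.

Lemma wmin_le_kweight k (w : interp ar 'I_k) : wmin Phi k <= kweight Phi k w.
Proof. exact: bigmin_le. Qed.

Lemma wmin_gt0 k : 0 < wmin Phi k.
Proof.
by apply: (big_ind (fun x => 0 < x)) => [|x y x_gt0 y_gt0|w _];
  rewrite ?lt_min ?x_gt0 ?kweight_gt0.
Qed.

Lemma kweight_eq1 k (D : finType) (w : interp ar D) :
  (maxarity Phi < k)%N -> kweight Phi k w = 1.
Proof.
rewrite /kweight /maxarity; elim: Phi => [|p Phi' IH].
  by rewrite !big_nil expR0.
by rewrite !big_cons gtn_max => /andP[p_lt /IH]; rewrite ltn_eqF.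
Qed.

Lemma wmax_eq1 k : (maxarity Phi < k)%N -> wmax Phi k = 1.
Proof.
by move=> k_gt; apply: (big_ind (fun x => x = 1)) => [|x y -> ->|w _];
  rewrite ?maxxx ?kweight_eq1.
Qed.

Lemma wmin_eq1 k : (maxarity Phi < k)%N -> wmin Phi k = 1.
Proof.
by move=> k_gt; apply: (big_ind (fun x => x = 1)) => [|x y -> ->|w _];
  rewrite ?minxx ?kweight_eq1.
Qed.

End Weights.

Section Atoms.
Variables (Rel : finType) (ar : Rel -> nat).

Lemma map_atom_inj (D D' : finType) (g : D -> D') :
  injective g -> injective (@map_atom _ ar _ _ g).
Proof.
move=> g_inj [r t] [r' t'] eq_gtt'; have rr' : r = r' := congr1 tag eq_gtt'.
subst r'; rewrite /map_atom /= in eq_gtt'.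
have /(congr1 val) /(inj_map g_inj) tt' := eq_from_Tagged eq_gtt'.
by rewrite (val_inj tt').
Qed.

Lemma map_atom_neq (ar_gt0 : forall r, 0 < ar r) (D1 D2 D : finType)
    (g : D1 -> D) (h : D2 -> D) (a : atom ar D1) (b : atom ar D2) :
  (forall x y, g x != h y) -> map_atom g a != map_atom h b.
Proof.
move: a b => [r t] [r' t'] gh_neq; apply/eqP => eq_gh.
have rr' : r = r' := congr1 tag eq_gh; subst r'; rewrite /map_atom /= in eq_gh.
have /(congr1 (fun u => tnth u (Ordinal (ar_gt0 r)))) := eq_from_Tagged eq_gh.
by rewrite !tnth_map; apply/eqP.
Qed.

Definition extend (D D' : finType) (g : D -> D') (d : interp ar D) :
  interp ar D' :=
  [ffun a => [exists b, (map_atom g b == a) && d b]].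

Lemma extend_map_atom (D D' : finType) (g : D -> D') (d : interp ar D)
    (a : atom ar D) :
  injective g -> extend g d (map_atom g a) = d a.
Proof.
move=> g_inj; rewrite ffunE; apply/existsP/idP => [[b]|da].
  by case/andP => /eqP/(map_atom_inj g_inj) ->.
by exists a; rewrite eqxx.
Qed.

Lemma extend_map_atom_out (D0 D D' : finType) (g : D0 -> D') (h : D -> D')
    (d : interp ar D0) (a : atom ar D) :
  (forall b, map_atom g b != map_atom h a) ->
  extend g d (map_atom h a) = false.
Proof.
move=> gh_neq; rewrite ffunE; apply/existsP => -[b /andP[/eqP/eqP]].
by rewrite (negbTE (gh_neq b)).
Qed.

End Atoms.

Section Splitting.
Variables (Rel : finType) (ar : Rel -> nat).
Hypothesis ar_gt0 : forall r : Rel, 0 < ar r.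
Variables (D1 D2 D : finType) (g : D1 -> D) (h : D2 -> D).
Hypotheses (g_inj : injective g) (h_inj : injective h).
Hypothesis gh_neq : forall x y, g x != h y.

Local Notation A := [set g x | x : D1].
Local Notation B := [set h y | y : D2].

Lemma disjoint_images : [disjoint A & B].
Proof.
apply/pred0P => z /=; apply/andP => -[/imsetP[x _ ->] /imsetP[y _ /eqP]].
exact/negP/gh_neq.
Qed.

Lemma Ngr_split (w : interp ar D) (f : formula ar) :
  Ngr f w = Ngr f (restr g w) + Ngr f (restr h w) +
    \sum_(S : {set D} | mixed A B S && (#|S| == arity f)) Ngr f (restr_set S w).
Proof.
rewrite Ngr_inT Ngr_in_partition /=.
rewrite (sum_card_mixed_split disjoint_images _ (arity_gt0 ar_gt0 f)).
rewrite (Ngr_restr ar_gt0 _ _ g_inj) (Ngr_restr ar_gt0 _ _ h_inj).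
rewrite (Ngr_in_partition _ _ (fun S => S \subset A)).
rewrite (Ngr_in_partition _ _ (fun S => S \subset B)).
congr (_ + _); apply: eq_bigr => S /andP[_ /eqP cardS]; exact: Ngr_in1.
Qed.

Definition extensions (w1 : interp ar D1) (w2 : interp ar D2) :
  {set interp ar D} :=
  [set w | (restr g w == w1) && (restr h w == w2)].

(* Flipping the atoms of g-images where a1 and b1 differ, and of h-images where
   a2 and b2 differ, is an involution sending extensions of (a1, a2) to
   extensions of (b1, b2). *)
Lemma card_extensions_le a1 b1 a2 b2 :
  #|extensions a1 a2| <= #|extensions b1 b2|.
Proof.
pose xor (D0 : finType) (u v : interp ar D0) : interp ar D0 :=
  [ffun a => u a (+) v a].
pose v := xor _ (extend g (xor _ a1 b1)) (extend h (xor _ a2 b2)).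
have xorK : involutive (xor _ ^~ v).
  by move=> w; apply/ffunP => a; rewrite !ffunE addbK.
rewrite -(card_imset _ (inv_inj xorK)); apply/subset_leq_card/subsetP => u.
case/imsetP=> w; rewrite !inE => /andP[/eqP wa1 /eqP wa2] ->.
apply/andP; split; apply/eqP/ffunP => a; rewrite ffunE ffunE /v ffunE.
- rewrite extend_map_atom // extend_map_atom_out => [|b]; last first.
    by rewrite eq_sym map_atom_neq.
  by rewrite -wa1 !ffunE addbF addKb.
- rewrite extend_map_atom // extend_map_atom_out => [|b];
    last exact: map_atom_neq.
  by rewrite -wa2 !ffunE addKb.
Qed.

Lemma card_extensions a1 b1 a2 b2 : #|extensions a1 a2| = #|extensions b1 b2|.
Proof. by apply/eqP; rewrite eqn_leq !card_extensions_le. Qed.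

Variables (R : realType) (Phi : mln ar R).
Local Open Scope ring_scope.
Local Notation Zsum T := (\sum_(w : interp ar T) weight Phi w).

Lemma sum_restr (F : interp ar D1 -> interp ar D2 -> R) a1 a2 :
  \sum_(w : interp ar D) F (restr g w) (restr h w) =
  (\sum_(w1 : interp ar D1) \sum_(w2 : interp ar D2) F w1 w2) *
    #|extensions a1 a2|%:R.
Proof.
rewrite (partition_big (fun w => (restr g w, restr h w)) xpredT) //=.
rewrite pair_big mulr_suml; apply: eq_bigr => -[w1 w2] _ /=.
rewrite (card_extensions a1 w1 a2 w2) mulr_natr -sumr_const.
rewrite (eq_bigr (fun=> F w1 w2)) => [|w /eqP[-> ->] //].
by apply: eq_bigl => w; rewrite inE xpair_eqE.
Qed.

Lemma weight_split (w : interp ar D) :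
  weight Phi w = weight Phi (restr g w) * weight Phi (restr h w) *
    \prod_(S : {set D} | mixed A B S) kweight Phi #|S| (restr_set S w).
Proof.
rewrite /weight /kweight -expR_sum -!expRD; congr expR.
under eq_bigr => p _.
  rewrite Ngr_split !natrD natr_sum !mulrDr mulr_sumr big_mkcondr /=.
  over.
rewrite !big_split /= exchange_big /=; congr (_ + _).
apply: eq_bigr => S _; rewrite [RHS]big_mkcond; apply: eq_bigr => p _.
by rewrite eq_sym; case: ifP; rewrite ?mulr0.
Qed.

Lemma weight_bounds (w : interp ar D) :
  weight Phi (restr g w) * weight Phi (restr h w) *
    \prod_(S : {set D} | mixed A B S) wmin Phi #|S| <= weight Phi w <=
  weight Phi (restr g w) * weight Phi (restr h w) *
    \prod_(S : {set D} | mixed A B S) wmax Phi #|S|.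
Proof.
have weight_ge0 (D0 : finType) (u : interp ar D0) : 0 <= weight Phi u.
  exact: expR_ge0.
rewrite weight_split; apply/andP; split; apply: ler_wpM2l;
  rewrite ?mulr_ge0 //; apply: ler_prod => S _.
  by rewrite wmin_le_kweight ltW ?wmin_gt0.
by rewrite kweight_le_wmax ltW ?kweight_gt0.
Qed.

Lemma sum_weight_bounds a1 a2 :
  Zsum D1 * Zsum D2 * #|extensions a1 a2|%:R *
    \prod_(S : {set D} | mixed A B S) wmin Phi #|S| <=
  Zsum D <=
  Zsum D1 * Zsum D2 * #|extensions a1 a2|%:R *
    \prod_(S : {set D} | mixed A B S) wmax Phi #|S|.
Proof.
have sum_weight_restr M :
    \sum_(w : interp ar D) weight Phi (restr g w) * weight Phi (restr h w) * M =
    Zsum D1 * Zsum D2 * #|extensions a1 a2|%:R * M.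
  rewrite (sum_restr (fun w1 w2 => weight Phi w1 * weight Phi w2 * M) a1 a2).
  rewrite [RHS]mulrAC; congr (_ * _); rewrite big_distrlr mulr_suml.
  by apply: eq_bigr => w1 _; rewrite mulr_suml.
rewrite -!sum_weight_restr; apply/andP; split; apply: ler_sum => w _;
  by case/andP: (weight_bounds w).
Qed.

End Splitting.

Local Open Scope ring_scope.

Lemma prod_nat_eq1_tail (R : comPzSemiRingType) (F : nat -> R) a b :
  (a < b)%N -> (forall k, (a < k)%N -> F k = 1) ->
  \prod_(1 <= k < b) F k = \prod_(1 <= k < a.+1) F k.
Proof.
move=> ab F1; rewrite (big_cat_nat _ (n := a.+1)) //= [X in _ * X]big_nat_cond.
rewrite [X in _ * X]big1 ?mulr1 //.
by move=> k /andP[/andP[ak _] _]; apply: F1.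
Qed.

Lemma Mfac_prod (R : realType) (c : nat -> R) n m d :
  (forall k, (d < k)%N -> c k = 1) ->
  Mfac c n m d =
  \prod_(1 <= k < (n + m).+1) c k ^+ ('C(n + m, k) - 'C(n, k) - 'C(m, k)).
Proof.
move=> c1; have tail1 k : (minn d (n + m) < k)%N ->
    c k ^+ ('C(n + m, k) - 'C(n, k) - 'C(m, k)) = 1.
  by rewrite gtn_min => /orP[/c1 -> | /bin_small ->]; rewrite ?expr1n.
rewrite /Mfac (prod_nat_eq1_tail _ tail1) ?ltnS ?geq_minl //.
by rewrite [RHS](prod_nat_eq1_tail _ tail1) ?ltnS ?geq_minr.
Qed.

Theorem proposition3 (Rel : finType) (ar : Rel -> nat)
    (har : forall r : Rel, (0 < ar r)%N)
    (R : realType) (Phi : mln ar R) (n m : nat)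
    (hn : (0 < n)%N) (hm : (0 < m)%N)
    (w1 : interp ar 'I_n) (w2 : interp ar 'I_m) :
  Mfac (wmin Phi) n m (maxarity Phi) * (Cext w1 w2)%:R * Z Phi n * Z Phi m
    <= Z Phi (n + m) /\
  Z Phi (n + m)
    <= Z Phi n * Z Phi m * (Cext w1 w2)%:R * Mfac (wmax Phi) n m (maxarity Phi).
Proof.
have lr_neq (x : 'I_n) (y : 'I_m) : lshift m x != rshift n y.
  by rewrite -val_eqE /= neq_ltn ltn_addr.
have mixed_Mfac (c : nat -> R) : (forall k, (maxarity Phi < k)%N -> c k = 1) ->
    \prod_(S : {set 'I_(n + m)} | mixed [set lshift m x | x : 'I_n]
                                       [set rshift n y | y : 'I_m] S) c #|S|
    = Mfac c n m (maxarity Phi).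
  move=> c1; rewrite (prod_mixed (disjoint_images lr_neq)) (Mfac_prod n m c1).
  rewrite card_ord.
  by rewrite !card_imset ?card_ord //; [exact: rshift_inj | exact: lshift_inj].
have /andP[lower upper] :=
  sum_weight_bounds har (@lshift_inj n m) (@rshift_inj n m) lr_neq Phi w1 w2.
rewrite -mulrA mulrC [_ * (Cext w1 w2)%:R]mulrC mulrA.
rewrite -(mixed_Mfac _ (@wmin_eq1 _ _ _ Phi)).
rewrite -(mixed_Mfac _ (@wmax_eq1 _ _ _ Phi)).
by split.
Qed.
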